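(* On the six equivalence classes of type A faces $[F_{L_0}],[F_{L_1}],[F_{L_2}],[F_{L_3}],[F_{L_4}],[F_0]$, the relation $\Subset$ is exactly the reflexive–transitive closure of $F_{L_1}\Subset F_{L_0}$, $F_{L_2}\Subset F_{L_0}$, $F_{L_3}\Subset F_{L_1}$, $F_{L_3}\Subset F_{L_2}$, $F_{L_4}\Subset F_{L_2}$, $F_0\Subset F_{L_3}$, $F_0\Subset F_{L_4}$. In particular $F_{L_1},F_{L_2}$ are incomparable, $F_{L_3},F_{L_4}$ are incomparable, and $F_{L_4}\not\Subset F_{L_1}$.
   Context: $H_k\subseteq\mathbb R[x,y,z]$: real ternary forms of degree $k$; $P_{3,4}=\{f\in H_4: f\ge0\text{ on }\mathbb P^2(\mathbb R)\}$. $GL_3(\mathbb R)$ acts on forms by $(\sigma f)(a)=f(\sigma^{-1}a)$. For faces $F,G$ of $P_{3,4}$, $[F]\Subset[G]$ means there is $\sigma\in GL_3(\mathbb R)$ with $F\subseteq\sigma(G)$. For a real line $l'$ (identified with a defining linear form) and a projective linear subspace $U\subseteq\mathbb P^2(\mathbb R)$ (possibly empty), $F_{(l',U)}=\{l'^2g: g\in H_2,\ g\ge0\text{ on }\mathbb P^2(\mathbb R),\ g|_U=0\}$. Fix distinct real lines $l,k$, a point $p\in l$, and $q\in\mathbb P^2(\mathbb R)\setminus l$: $F_{L_0}=F_{(l,\emptyset)}$, $F_{L_1}=F_{(l,\{q\})}$, $F_{L_2}=F_{(l,\{p\})}$, $F_{L_3}=F_{(l,k)}$, $F_{L_4}=F_{(l,l)}$,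 $F_0=\{0\}$. *)

From Stdlib Require Import Reals Relations.
Open Scope R_scope.

(** Vectors of R^3 (homogeneous coordinates of P^2(R)). *)
Definition vec : Type := (R * R * R)%type.
Definition vx (a : vec) : R := fst (fst a).
Definition vy (a : vec) : R := snd (fst a).
Definition vz (a : vec) : R := snd a.
Definition vzero : vec := (0, 0, 0).
Definition vscal (t : R) (a : vec) : vec := (t * vx a, t * vy a, t * vz a).

(** A linear form, given by its coefficient vector; a real line of P^2(R)
    is identified with a nonzero linear form. *)
Definition lin (l : vec) (a : vec) : R := vx l * vx a + vy l * vy a + vz l * vz a.

(** Ternary forms are represented by their polynomial functions R^3 -> R
    (over the infinite field R a form is determined by its function). *)
Definition form : Type := vec -> R.

Definition is_form (d : nat) (f : form) : Prop :=
  exists c : nat -> nat -> R,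
    forall x y z : R,
      f (x, y, z) =
      sum_f_R0 (fun i => sum_f_R0 (fun j => c i j * x ^ i * y ^ j * z ^ (d - i - j)) (d - i)) d.

Definition linmap (s : vec -> vec) : Prop :=
  exists r1 r2 r3 : vec, forall a, s a = (lin r1 a, lin r2 a, lin r3 a).

(** Action of sigma (with inverse sinv) on forms: (sigma f)(a) = f(sigma^{-1} a). *)
Definition act (sinv : vec -> vec) (f : form) : form := fun a => f (sinv a).

(** [F ⋐ G]: exists sigma in GL_3(R) with F ⊆ sigma(G). Elements of GL_3(R) are
    the linear bijections of R^3; sinv is the inverse of sigma. *)
Definition face_sub (F G : form -> Prop) : Prop :=
  exists s sinv : vec -> vec,
    linmap s /\ linmap sinv /\ (forall a, s (sinv a) = a) /\ (forall a, sinv (s a) = a) /\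
    (forall f, F f -> exists g, G g /\ f = act sinv g).

(** F_{(l',U)} = { l'^2 g : g in H_2, g >= 0 on P^2(R), g|_U = 0 }, where U is
    given by its cone in R^3 (the set of vectors representing points of U). *)
Definition faceLU (l' : vec) (U : vec -> Prop) : form -> Prop :=
  fun f => exists g : form,
    is_form 2 g /\ (forall a, 0 <= g a) /\ (forall a, U a -> g a = 0) /\
    f = (fun a => (lin l' a) ^ 2 * g a).

Definition U_empty : vec -> Prop := fun _ => False.
Definition U_point (q : vec) : vec -> Prop := fun a => exists t, a = vscal t q.
Definition U_line (k : vec) : vec -> Prop := fun a => lin k a = 0.

Definition face0 : form -> Prop := fun f => f = (fun _ => 0).

Inductive faceA : Type := L0 | L1 | L2 | L3 | L4 | Fzero.

Definition faceA_of (l k p q : vec) (i : faceA) : form -> Prop :=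
  match i with
  | L0 => faceLU l U_empty
  | L1 => faceLU l (U_point q)
  | L2 => faceLU l (U_point p)
  | L3 => faceLU l (U_line k)
  | L4 => faceLU l (U_line l)
  | Fzero => face0
  end.

Definition genA (i j : faceA) : Prop :=
  match i, j with
  | L1, L0 | L2, L0 | L3, L1 | L3, L2 | L4, L2 | Fzero, L3 | Fzero, L4 => True
  | _, _ => False
  end.

(* Inclusions: a linear automorphism s of R^3 with l o s^{-1} = l transports
   F_{(l,U1)} into F_{(l,U2)} as soon as s maps U2 into U1 (face_sub_transport).
   The identity and suitable shears a |-> a + w(a) d give all seven coverings.

   Non-inclusions rest on a rigidity statement (rigidity): if F_{(l,U1)} lies
   inside sigma(F_{(l,U2)}) and g is a "test form" for U1 (a psd quadratic
   vanishing on U1 and not identically zero on any other line), then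
   l^2 g = (l o s^{-1})^2 (h o s^{-1}) forces l o s^{-1} to be a multiple of l,
   hence g o s is a multiple of h and vanishes on U2.  Comparing the zero sets
   of the test forms |a|^2, |v x a|^2 and l(a)^2 with U2 excludes almost all
   remaining pairs; F_{L3} below F_{L4} fails because l^2 k^2 is not a multiple
   of a fourth power (no_fourth_power), and no nonzero face is below {0}. *)

From Stdlib Require Import Reals Relations Lra Psatz FunctionalExtensionality Classical.
Open Scope R_scope.

Definition vadd (u v : vec) : vec := (vx u + vx v, vy u + vy v, vz u + vz v).
Definition cross (u v : vec) : vec :=
  (vy u * vz v - vz u * vy v, vz u * vx v - vx u * vz v, vx u * vy v - vy u * vx v).
Definition nsq (u : vec) : R := lin u u.

Lemma veq (a b : vec) : vx a = vx b -> vy a = vy b -> vz a = vz b -> a = b.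
Proof.
  destruct a as [[? ?] ?], b as [[? ?] ?]; unfold vx, vy, vz; simpl.
  intros -> -> ->; reflexivity.
Qed.

Ltac vec_ring :=
  repeat match goal with v : vec |- _ => destruct v as [[? ?] ?] end;
  try apply veq; unfold nsq, lin, vscal, vadd, cross, vzero, vx, vy, vz; simpl; ring.

Lemma lin_vadd u a b : lin u (vadd a b) = lin u a + lin u b.
Proof. vec_ring. Qed.
Lemma lin_vscal u t a : lin u (vscal t a) = t * lin u a.
Proof. vec_ring. Qed.
Lemma lin_vscal_l u t a : lin (vscal t u) a = t * lin u a.
Proof. vec_ring. Qed.
Lemma lin_comm u a : lin u a = lin a u.
Proof. vec_ring. Qed.
Lemma lin_vzero u : lin u vzero = 0.
Proof. vec_ring. Qed.
Lemma lin_cross_l u v : lin u (cross u v) = 0.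
Proof. vec_ring. Qed.
Lemma lin_cross_r u v : lin v (cross u v) = 0.
Proof. vec_ring. Qed.
Lemma lin_cross_cross u v : lin u (cross v (cross u v)) = nsq (cross u v).
Proof. vec_ring. Qed.
Lemma nsq_vscal t a : nsq (vscal t a) = t ^ 2 * nsq a.
Proof. vec_ring. Qed.
Lemma cross_anti u v : cross u v = vscal (-1) (cross v u).
Proof. vec_ring. Qed.
Lemma cross_vadd_self u v : cross u (vadd u v) = cross u v.
Proof. vec_ring. Qed.

Lemma nsq_ge0 a : 0 <= nsq a.
Proof. destruct a as [[x y] z]; unfold nsq, lin, vx, vy, vz; simpl; nra. Qed.

Lemma nsq_eq0 u : nsq u = 0 -> u = vzero.
Proof.
  destruct u as [[x y] z]; unfold nsq, lin, vzero, vx, vy, vz; simpl; intros H.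
  assert (x = 0) by nra; assert (y = 0) by nra; assert (z = 0) by nra; subst; reflexivity.
Qed.

Lemma nsq_pos u : u <> vzero -> 0 < nsq u.
Proof.
  intros Hu; destruct (Rle_lt_dec (nsq u) 0) as [H|H]; [|exact H].
  exfalso; apply Hu, nsq_eq0; pose proof (nsq_ge0 u); lra.
Qed.

Lemma nonzero_of_lin u b : lin u b <> 0 -> b <> vzero.
Proof. intros H ->; apply H, lin_vzero. Qed.

Lemma parallel_of_cross u v : u <> vzero -> cross u v = vzero -> exists t, v = vscal t u.
Proof.
  intros Hu Hc; exists (lin u v / nsq u); pose proof (nsq_pos u Hu) as Hn.
  destruct u as [[a b] c], v as [[x y] z]; unfold cross, vzero in Hc; simpl in Hc.
  injection Hc as e1 e2 e3; unfold nsq, lin, vx, vy, vz in *; simpl in *.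
  apply veq; unfold vscal, vx, vy, vz; simpl; field_simplify_eq; try lra;
    apply Rminus_diag_uniq.
  - transitivity (c * (c * x - a * z) - b * (a * y - b * x)); [ring | rewrite e2, e3; ring].
  - transitivity (a * (a * y - b * x) - c * (b * z - c * y)); [ring | rewrite e1, e3; ring].
  - transitivity (b * (b * z - c * y) - a * (c * x - a * z)); [ring | rewrite e1, e2; ring].
Qed.

Lemma cross_nonzero_of_sep m x y :
  lin m x <> 0 -> lin m y = 0 -> y <> vzero -> cross x y <> vzero.
Proof.
  intros Hx Hy Hy0 Hc.
  destruct (parallel_of_cross x y (nonzero_of_lin m x Hx) Hc) as [t ->].
  rewrite lin_vscal in Hy.
  assert (t = 0) by (apply Rmult_integral in Hy; tauto); subst t.
  apply Hy0; vec_ring.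
Qed.

Lemma cross_nonzero_of_not_parallel l k :
  l <> vzero -> ~ (exists c, k = vscal c l) -> cross l k <> vzero /\ cross k l <> vzero.
Proof.
  intros Hl Hlk.
  assert (Hc : cross l k <> vzero) by (intros E; apply Hlk, parallel_of_cross; assumption).
  split; [exact Hc|]; intros E; apply Hc; rewrite cross_anti, E; vec_ring.
Qed.

Lemma point_on_off m n : cross n m <> vzero -> exists b, lin m b = 0 /\ lin n b <> 0.
Proof.
  intros H; exists (cross m (cross n m)); split; [apply lin_cross_l|].
  rewrite lin_cross_cross; pose proof (nsq_pos _ H); lra.
Qed.

Definition qpoly (A B C D E F x y z : R) : R :=
  A * x ^ 2 + B * y ^ 2 + C * z ^ 2 + D * x * y + E * x * z + F * y * z.

Lemma form2_poly f :
  is_form 2 f -> exists A B C D E F, forall x y z, f (x, y, z) = qpoly A B C D E F x y z.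
Proof.
  intros [c Hc].
  exists (c 2%nat 0%nat), (c 0%nat 2%nat), (c 0%nat 0%nat),
    (c 1%nat 1%nat), (c 1%nat 0%nat), (c 0%nat 1%nat).
  intros; rewrite Hc; unfold qpoly; simpl; ring.
Qed.

Lemma poly_form2 f A B C D E F :
  (forall x y z, f (x, y, z) = qpoly A B C D E F x y z) -> is_form 2 f.
Proof.
  intros H; exists (fun i j => match i, j with
    | 2%nat, 0%nat => A | 0%nat, 2%nat => B | 0%nat, 0%nat => C
    | 1%nat, 1%nat => D | 1%nat, 0%nat => E | 0%nat, 1%nat => F | _, _ => 0 end).
  intros; rewrite H; unfold qpoly; simpl; ring.
Qed.

(* Quadratic forms are stable under linear substitution: the coefficients of
   h o s are read off from its values at e_i and e_i + e_j. *)
Lemma form2_comp h s : is_form 2 h -> linmap s -> is_form 2 (fun a => h (s a)).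
Proof.
  intros Hh [r1 [r2 [r3 Hs]]]; destruct (form2_poly h Hh) as (A & B & C & D & E & F & HP).
  apply (poly_form2 _ (h (s (1,0,0))) (h (s (0,1,0))) (h (s (0,0,1)))
    (h (s (1,1,0)) - h (s (1,0,0)) - h (s (0,1,0)))
    (h (s (1,0,1)) - h (s (1,0,0)) - h (s (0,0,1)))
    (h (s (0,1,1)) - h (s (0,1,0)) - h (s (0,0,1)))).
  intros x y z; rewrite !Hs, !HP.
  destruct r1 as [[? ?] ?], r2 as [[? ?] ?], r3 as [[? ?] ?].
  unfold qpoly, lin, vx, vy, vz; simpl; ring.
Qed.

Lemma form2_expand f a b t : is_form 2 f ->
  f (vadd a (vscal t b)) = f a + t * (f (vadd a b) - f a - f b) + t ^ 2 * f b.
Proof.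
  intros Hf; destruct (form2_poly f Hf) as (A & B & C & D & E & F & HP).
  destruct a as [[? ?] ?], b as [[? ?] ?]; unfold vadd, vscal, vx, vy, vz; simpl.
  rewrite !HP; unfold qpoly; ring.
Qed.

Lemma form2_scal f t a : is_form 2 f -> f (vscal t a) = t ^ 2 * f a.
Proof.
  intros Hf; destruct (form2_poly f Hf) as (A & B & C & D & E & F & HP).
  destruct a as [[? ?] ?]; unfold vscal, vx, vy, vz; simpl; rewrite !HP; unfold qpoly; ring.
Qed.

Lemma form2_scale r f : is_form 2 f -> is_form 2 (fun a => r * f a).
Proof.
  intros Hf; destruct (form2_poly f Hf) as (A & B & C & D & E & F & HP).
  apply (poly_form2 _ (r * A) (r * B) (r * C) (r * D) (r * E) (r * F)).
  intros; rewrite HP; unfold qpoly; ring.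
Qed.

(* The test forms: squares of linear forms, and |v x a|^2, which vanishes
   exactly on the span of v. *)
Definition sq_lin (m : vec) : form := fun a => lin m a ^ 2.
Definition sq_cross (v : vec) : form := fun a => nsq (cross v a).

Lemma form2_nsq : is_form 2 nsq.
Proof.
  apply (poly_form2 _ 1 1 1 0 0 0); intros; unfold nsq, lin, qpoly, vx, vy, vz; simpl; ring.
Qed.

Lemma form2_sq_lin m : is_form 2 (sq_lin m).
Proof.
  destruct m as [[a b] c]; apply (poly_form2 _ (a*a) (b*b) (c*c) (2*a*b) (2*a*c) (2*b*c)).
  intros; unfold sq_lin, lin, qpoly, vx, vy, vz; simpl; ring.
Qed.

Lemma form2_sq_cross v : is_form 2 (sq_cross v).
Proof.
  apply (form2_comp nsq (cross v) form2_nsq).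
  destruct v as [[a b] c]; exists (0, -c, b), (c, 0, -a), (-b, a, 0); intros x; vec_ring.
Qed.

(* A psd quadratic form is invariant under translation by any of its zeros:
   otherwise it would be a non-constant affine function of t along x + t b. *)
Lemma psd_translation_invariant h x b :
  is_form 2 h -> (forall a, 0 <= h a) -> h b = 0 -> h (vadd x b) = h x.
Proof.
  intros Hh Hp Hb.
  destruct (Req_dec (h (vadd x b) - h x) 0) as [E|E]; [lra|exfalso].
  set (d := h (vadd x b) - h x) in *.
  pose proof (Hp (vadd x (vscal (- (h x + 1) / d) b))) as Hneg.
  rewrite (form2_expand h x b _ Hh), Hb in Hneg; fold d in Hneg.
  assert (- (h x + 1) / d * (d - 0) = - (h x + 1)) by (field; exact E).
  nra.
Qed.

Lemma psd_vanishing_on_plane l h : l <> vzero -> is_form 2 h -> (forall a, 0 <= h a) ->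
  (forall b, lin l b = 0 -> h b = 0) -> forall a, h a = h l / nsq l ^ 2 * lin l a ^ 2.
Proof.
  intros Hl Hh Hp Hz a; pose proof (nsq_pos l Hl) as Hn.
  assert (Ea : forall t, a = vadd (vscal t l) (vadd a (vscal (- t) l))) by (intros; vec_ring).
  set (t := lin l a / nsq l); rewrite (Ea t) at 1.
  rewrite psd_translation_invariant, form2_scal; auto.
  - unfold t; field; lra.
  - apply Hz; rewrite lin_vadd, lin_vscal; unfold t, nsq in *; field; lra.
Qed.

(* Two quadratic forms agreeing off the plane l = 0 agree everywhere, by
   f(a) = 2 f(a + l) + 2 f(l) - f(a + 2 l). *)
Lemma form2_eq_off_plane l f1 f2 : l <> vzero -> is_form 2 f1 -> is_form 2 f2 ->
  (forall a, lin l a <> 0 -> f1 a = f2 a) -> forall a, f1 a = f2 a.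
Proof.
  intros Hl H1 H2 Hoff a; pose proof (nsq_pos l Hl) as Hn.
  destruct (Req_dec (lin l a) 0) as [Ha|Ha]; [|auto].
  assert (E1 : f1 (vadd a l) = f2 (vadd a l))
    by (apply Hoff; rewrite lin_vadd, Ha; unfold nsq in Hn; lra).
  assert (El : f1 l = f2 l) by (apply Hoff; unfold nsq in Hn; lra).
  assert (E2 : f1 (vadd a (vscal 2 l)) = f2 (vadd a (vscal 2 l))).
  { apply Hoff; rewrite lin_vadd, lin_vscal, Ha; unfold nsq in Hn; lra. }
  pose proof (form2_expand f1 a l 2 H1); pose proof (form2_expand f2 a l 2 H2).
  simpl in *; lra.
Qed.

Lemma linmap_vscal s t a : linmap s -> s (vscal t a) = vscal t (s a).
Proof. intros [r1 [r2 [r3 H]]]; rewrite !H; vec_ring. Qed.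

Lemma linmap_vzero s : linmap s -> s vzero = vzero.
Proof. intros [r1 [r2 [r3 H]]]; rewrite !H; vec_ring. Qed.

Lemma linmap_id : linmap (fun a => a).
Proof. exists (1, 0, 0), (0, 1, 0), (0, 0, 1); intros a; vec_ring. Qed.

Lemma lin_pullback l s : linmap s -> exists l', forall a, lin l (s a) = lin l' a.
Proof.
  intros [r1 [r2 [r3 H]]].
  exists (vadd (vadd (vscal (vx l) r1) (vscal (vy l) r2)) (vscal (vz l) r3)).
  intros a; rewrite H; vec_ring.
Qed.

Definition shear (w d : vec) (a : vec) : vec := vadd a (vscal (lin w a) d).

Lemma linmap_shear w d : linmap (shear w d).
Proof.
  destruct w as [[a b] c], d as [[x y] z].
  exists (1 + x * a, x * b, x * c), (y * a, 1 + y * b, y * c), (z * a, z * b, 1 + z * c).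
  intros v; unfold shear; vec_ring.
Qed.

Lemma shear_inv w d a : lin w d = 0 -> shear w d (shear (vscal (-1) w) d a) = a.
Proof.
  intros H; unfold shear; rewrite lin_vadd, lin_vscal, H, lin_vscal_l; vec_ring.
Qed.

Definition nonzero_off_lines (l : vec) (g : form) : Prop :=
  forall l', cross l l' <> vzero -> exists b, lin l' b = 0 /\ lin l b <> 0 /\ g b <> 0.

(* Sufficient condition: the zeros of g lie in the plane l = 0 or on one
   line R v; two points of l' = 0 off l = 0 cannot both lie on R v. *)
Lemma nonzero_off_lines_of_zeros l v g :
  (forall a, g a = 0 -> lin l a = 0 \/ exists t, a = vscal t v) -> nonzero_off_lines l g.
Proof.
  intros Hz l' Hc; set (w := cross l l') in *; set (b1 := cross l' w).
  assert (Hb1 : lin l' b1 = 0) by apply lin_cross_l.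
  assert (Lb1 : lin l b1 = nsq w) by apply lin_cross_cross.
  assert (Lw : lin l w = 0) by apply lin_cross_l.
  assert (L'w : lin l' w = 0) by apply lin_cross_r.
  pose proof (nsq_pos w Hc) as Hn.
  destruct (Req_dec (g b1) 0) as [G1|G1]; [|exists b1; repeat split; lra].
  destruct (Req_dec (g (vadd b1 w)) 0) as [G2|G2];
    [|exists (vadd b1 w); rewrite !lin_vadd; repeat split; lra].
  exfalso.
  destruct (Hz _ G1) as [Z1|[t1 T1]]; [lra|].
  destruct (Hz _ G2) as [Z2|[t2 T2]]; [rewrite lin_vadd in Z2; lra|].
  assert (Ew : w = vscal (t2 - t1) v).
  { rewrite T1 in T2; clearbody w; clear - T2; destruct w as [[? ?] ?], v as [[? ?] ?].
    unfold vadd, vscal, vx, vy, vz in *; simpl in *; injection T2 as e1 e2 e3.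
    apply veq; unfold vx, vy, vz; simpl; lra. }
  rewrite T1, lin_vscal in Lb1; rewrite Ew, lin_vscal in Lw.
  assert (t2 - t1 = 0) by (apply Rmult_integral in Lw; destruct Lw; [auto | nra]).
  rewrite Ew, nsq_vscal in Hn; nra.
Qed.

Definition test_form (l : vec) (U : vec -> Prop) (g : form) : Prop :=
  is_form 2 g /\ (forall a, 0 <= g a) /\ (forall u, U u -> g u = 0) /\ nonzero_off_lines l g.

Lemma test_nsq l : test_form l U_empty nsq.
Proof.
  repeat split; [apply form2_nsq | apply nsq_ge0 | intros u [] |].
  apply (nonzero_off_lines_of_zeros l l); intros a Ha; right; exists 0.
  rewrite (nsq_eq0 a Ha); vec_ring.
Qed.

Lemma test_sq_cross l v : v <> vzero -> test_form l (U_point v) (sq_cross v).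
Proof.
  intros Hv; repeat split; [apply form2_sq_cross | intros a; apply nsq_ge0 | |].
  - intros u [t ->]; unfold sq_cross; vec_ring.
  - apply (nonzero_off_lines_of_zeros l v); intros a Ha; right.
    apply parallel_of_cross; [exact Hv | apply nsq_eq0, Ha].
Qed.

Lemma U_point_self v : U_point v v.
Proof. exists 1; vec_ring. Qed.

Lemma sq_lin_ge0 m a : 0 <= sq_lin m a.
Proof. unfold sq_lin; nra. Qed.

Lemma sq_lin_vanishes m u : U_line m u -> sq_lin m u = 0.
Proof. unfold sq_lin, U_line; intros ->; ring. Qed.

Lemma test_sq_lin l : test_form l (U_line l) (sq_lin l).
Proof.
  repeat split; [apply form2_sq_lin | apply sq_lin_ge0 | apply sq_lin_vanishes |].
  apply (nonzero_off_lines_of_zeros l l); intros a Ha; left; unfold sq_lin in Ha; nra.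
Qed.

Lemma faceLU_member l U g : is_form 2 g -> (forall a, 0 <= g a) -> (forall u, U u -> g u = 0) ->
  faceLU l U (fun a => lin l a ^ 2 * g a).
Proof. intros; exists g; repeat split; auto. Qed.

Lemma face_sub_refl F : face_sub F F.
Proof.
  exists (fun a => a), (fun a => a); repeat split; try apply linmap_id.
  intros f Hf; exists f; split; [exact Hf | reflexivity].
Qed.

Lemma face_sub_zero l U : face_sub face0 (faceLU l U).
Proof.
  exists (fun a => a), (fun a => a); repeat split; try apply linmap_id.
  intros f ->; exists (fun a => lin l a ^ 2 * 0); split.
  - apply faceLU_member; [|intros; apply Rle_refl | reflexivity].
    apply (poly_form2 _ 0 0 0 0 0 0); intros; unfold qpoly; ring.
  - unfold act; apply functional_extensionality; intros; ring.
Qed.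

Lemma face_sub_transport l U1 U2 s sinv :
  linmap s -> linmap sinv -> (forall a, s (sinv a) = a) -> (forall a, sinv (s a) = a) ->
  (forall a, lin l (sinv a) = lin l a) -> (forall u, U2 u -> U1 (s u)) ->
  face_sub (faceLU l U1) (faceLU l U2).
Proof.
  intros Hs Hsi Hssi Hsis HL HU; exists s, sinv; repeat split; auto.
  intros f (g & Hg & Hgp & Hgz & ->); exists (fun a => lin l a ^ 2 * g (s a)); split.
  - apply faceLU_member; auto using form2_comp.
  - unfold act; apply functional_extensionality; intros a; rewrite HL, Hssi; reflexivity.
Qed.

Lemma face_sub_of_incl l U1 U2 : (forall u, U2 u -> U1 u) -> face_sub (faceLU l U1) (faceLU l U2).
Proof.
  intros H; apply (face_sub_transport l U1 U2 (fun a => a) (fun a => a)); auto using linmap_id.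
Qed.

Lemma face_sub_of_shear l U1 U2 w d : lin l d = 0 -> lin w d = 0 ->
  (forall u, U2 u -> U1 (shear w d u)) -> face_sub (faceLU l U1) (faceLU l U2).
Proof.
  intros Hld Hwd HU; apply (face_sub_transport l U1 U2 (shear w d) (shear (vscal (-1) w) d));
    auto using linmap_shear.
  - intros a; apply shear_inv, Hwd.
  - intros a; pose proof (shear_inv (vscal (-1) w) d a) as E.
    replace (vscal (-1) (vscal (-1) w)) with w in E by vec_ring.
    apply E; rewrite lin_vscal_l, Hwd; ring.
  - intros a; unfold shear; rewrite lin_vadd, lin_vscal, Hld; ring.
Qed.

Lemma dual_functional x d alpha : cross x d <> vzero -> exists w, lin w d = 0 /\ lin w x = alpha.
Proof.
  intros Hc; pose proof (nsq_pos _ Hc) as Hn.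
  exists (vscal (alpha / nsq (cross x d)) (cross d (cross x d))); rewrite !lin_vscal_l; split.
  - rewrite lin_comm, lin_cross_l; ring.
  - rewrite lin_comm, lin_cross_cross; field; lra.
Qed.

(* F_{(l,k)} is below F_{(l,x)} as soon as some d with l(d) = 0, k(d) <> 0
   is independent of x: a shear along d moves x onto the line k = 0. *)
Lemma line_face_sub_point_face l k x d : lin l d = 0 -> lin k d <> 0 -> cross x d <> vzero ->
  face_sub (faceLU l (U_line k)) (faceLU l (U_point x)).
Proof.
  intros Hld Hkd Hxd.
  destruct (dual_functional x d (- lin k x / lin k d) Hxd) as (w & Hwd & Hwx).
  apply (face_sub_of_shear l _ _ w d Hld Hwd); intros u [t ->].
  unfold U_line, shear; rewrite lin_vadd, !lin_vscal, Hwx; field; exact Hkd.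
Qed.

Lemma face_sub_faceLU_inv l U1 U2 f :
  face_sub (faceLU l U1) (faceLU l U2) -> faceLU l U1 f ->
  exists s sinv h, linmap sinv /\ (forall a, sinv (s a) = a) /\
    is_form 2 h /\ (forall a, 0 <= h a) /\ (forall u, U2 u -> h u = 0) /\
    (forall a, f a = lin l (sinv a) ^ 2 * h (sinv a)).
Proof.
  intros (s & sinv & _ & Hsi & _ & Hsis & HF) Hf.
  destruct (HF f Hf) as [g' [(h & Hh & Hhp & Hhz & ->) ->]].
  exists s, sinv, h; repeat split; auto.
Qed.

Lemma rigidity l U1 U2 g : l <> vzero -> test_form l U1 g ->
  face_sub (faceLU l U1) (faceLU l U2) ->
  exists s sinv c, linmap sinv /\ (forall a, sinv (s a) = a) /\ c <> 0 /\
    (forall b, lin l b = c * lin l (s b)) /\ (forall u, U2 u -> g (s u) = 0).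
Proof.
  intros Hl (Hg & Hgp & Hgz & Hoff) Hsub; pose proof (nsq_pos l Hl) as Hn.
  destruct (face_sub_faceLU_inv _ _ _ _ Hsub (faceLU_member l U1 g Hg Hgp Hgz))
    as (s & sinv & h & Hsi & Hsis & Hh & _ & Hhz & Heq).
  destruct (lin_pullback l sinv Hsi) as [l' HL].
  assert (Hpar : cross l l' = vzero).
  { apply NNPP; intros Hc; destruct (Hoff l' Hc) as (b & Hb' & Hb & Hgb).
    specialize (Heq b); rewrite HL, Hb' in Heq; apply Hgb.
    apply (Rmult_eq_reg_l (lin l b ^ 2)); [|apply pow_nonzero, Hb]; rewrite Heq; ring. }
  destruct (parallel_of_cross l l' Hl Hpar) as [c Hc].
  assert (HLc : forall a, lin l (sinv a) = c * lin l a)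
    by (intros; rewrite HL, Hc, lin_vscal_l; reflexivity).
  assert (Hgh : forall a, g a = c ^ 2 * h (sinv a)).
  { apply (form2_eq_off_plane l); auto using form2_scale, form2_comp.
    intros a Ha; specialize (Heq a); rewrite HLc in Heq; cbv beta in Heq.
    apply (Rmult_eq_reg_l (lin l a ^ 2)); [|apply pow_nonzero, Ha]; rewrite Heq; ring. }
  exists s, sinv, c; repeat split; auto.
  - intros C; specialize (HLc (s l)); rewrite Hsis, C in HLc; unfold nsq in Hn; lra.
  - intros b; rewrite <- HLc, Hsis; reflexivity.
  - intros u Hu; rewrite Hgh, Hsis, Hhz by exact Hu; ring.
Qed.

(* F_{L0} is below no F_{(l,U)} with U nonzero: |s u|^2 = 0 forces u = 0. *)
Lemma not_sub_L0 l U u : l <> vzero -> U u -> u <> vzero ->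
  ~ face_sub (faceLU l U_empty) (faceLU l U).
Proof.
  intros Hl Hu Hu0 Hsub.
  destruct (rigidity l _ _ nsq Hl (test_nsq l) Hsub) as (s & sinv & c & Hsi & Hsis & _ & _ & Hz).
  apply Hu0; rewrite <- (Hsis u), (nsq_eq0 _ (Hz u Hu)); apply linmap_vzero, Hsi.
Qed.

(* F_{(l,q)}, q off l, is below no F_{(l,U)} where U meets the line l:
   such a point is sent into R q while staying on l, hence it is 0. *)
Lemma not_sub_L1 l q U u : l <> vzero -> lin l q <> 0 -> U u -> u <> vzero -> lin l u = 0 ->
  ~ face_sub (faceLU l (U_point q)) (faceLU l U).
Proof.
  intros Hl Hq Hu Hu0 Hlu Hsub; pose proof (nonzero_of_lin l q Hq) as Hq0.
  destruct (rigidity l _ _ _ Hl (test_sq_cross l q Hq0) Hsub)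
    as (s & sinv & c & Hsi & Hsis & Hc & Hlc & Hz).
  destruct (parallel_of_cross q (s u) Hq0 (nsq_eq0 _ (Hz u Hu))) as [t Ht].
  rewrite Hlc, Ht, lin_vscal in Hlu.
  assert (t = 0) by (destruct (Rmult_integral _ _ Hlu) as [|H]; [contradiction|];
                     destruct (Rmult_integral _ _ H); [auto | contradiction]).
  apply Hu0; rewrite <- (Hsis u), Ht; subst t.
  replace (vscal 0 q) with vzero by vec_ring; apply linmap_vzero, Hsi.
Qed.

Lemma not_sub_L2 l p U u : l <> vzero -> p <> vzero -> lin l p = 0 -> U u -> lin l u <> 0 ->
  ~ face_sub (faceLU l (U_point p)) (faceLU l U).
Proof.
  intros Hl Hp Hlp Hu Hlu Hsub.
  destruct (rigidity l _ _ _ Hl (test_sq_cross l p Hp) Hsub)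
    as (s & sinv & c & _ & _ & _ & Hlc & Hz).
  destruct (parallel_of_cross p (s u) Hp (nsq_eq0 _ (Hz u Hu))) as [t Ht].
  apply Hlu; rewrite Hlc, Ht, lin_vscal, Hlp; ring.
Qed.

Lemma not_sub_L4 l U u : l <> vzero -> U u -> lin l u <> 0 ->
  ~ face_sub (faceLU l (U_line l)) (faceLU l U).
Proof.
  intros Hl Hu Hlu Hsub.
  destruct (rigidity l _ _ _ Hl (test_sq_lin l) Hsub) as (s & sinv & c & _ & _ & _ & Hlc & Hz).
  pose proof (Hz u Hu) as Z; unfold sq_lin in Z.
  apply Hlu; rewrite Hlc; replace (lin l (s u)) with 0 by nra; ring.
Qed.

(* F_{(l,p)} is not below F_{(l,l)}: the injective s would map the whole
   plane l = 0 into the line R p. *)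
Lemma not_sub_L2_L4 l p : l <> vzero -> p <> vzero -> lin l p = 0 ->
  ~ face_sub (faceLU l (U_point p)) (faceLU l (U_line l)).
Proof.
  intros Hl Hp Hlp Hsub.
  destruct (rigidity l _ _ _ Hl (test_sq_cross l p Hp) Hsub)
    as (s & sinv & c & Hsi & Hsis & _ & _ & Hz).
  assert (Hpre : forall u, lin l u = 0 -> exists t, u = vscal t (sinv p)).
  { intros u Hu; destruct (parallel_of_cross p (s u) Hp (nsq_eq0 _ (Hz u Hu))) as [t Ht].
    exists t; rewrite <- (linmap_vscal sinv t p Hsi), <- Ht, Hsis; reflexivity. }
  assert (Hlp' : cross l p <> vzero).
  { pose proof (nsq_pos l Hl); apply (cross_nonzero_of_sep l); auto; unfold nsq in *; lra. }
  destruct (Hpre p Hlp) as [t1 T1]; destruct (Hpre (cross l p) (lin_cross_l l p)) as [t2 T2].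
  set (P := sinv p) in *; clearbody P.
  assert (D : lin (vscal t1 P) (vscal t2 P) = 0) by (rewrite <- T1, <- T2; apply lin_cross_r).
  assert (P1 : 0 < nsq (vscal t1 P)) by (rewrite <- T1; apply nsq_pos, Hp).
  assert (P2 : 0 < nsq (vscal t2 P)) by (rewrite <- T2; apply nsq_pos, Hlp').
  rewrite lin_vscal, lin_vscal_l in D; rewrite nsq_vscal in P1, P2; unfold nsq in *; nra.
Qed.

Lemma no_fourth_power l k l' C : cross l k <> vzero -> cross k l <> vzero ->
  ~ (forall a, lin l a ^ 2 * lin k a ^ 2 = C * lin l' a ^ 4).
Proof.
  intros Hlk Hkl Heq.
  destruct (point_on_off k l Hlk) as (bk & Kbk & Lbk).
  destruct (point_on_off l k Hkl) as (bl & Lbl & Kbl).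
  pose proof (Heq bk) as E1; pose proof (Heq bl) as E2; pose proof (Heq (vadd bk bl)) as E3.
  rewrite Kbk in E1; rewrite Lbl in E2; rewrite !lin_vadd, Kbk, Lbl in E3.
  assert (Hpos : 0 < lin l bk ^ 2 * lin k bl ^ 2).
  { pose proof (pow2_ge_0 (lin l bk)); pose proof (pow_nonzero _ 2 Lbk).
    pose proof (pow2_ge_0 (lin k bl)); pose proof (pow_nonzero _ 2 Kbl).
    apply Rmult_lt_0_compat; lra. }
  destruct (Req_dec C 0) as [C0|C0]; [rewrite C0 in E3; nra|].
  assert (Z : forall b, 0 = C * lin l' b ^ 4 -> lin l' b = 0).
  { intros b Hb; apply NNPP; intros Hb'; apply (pow_nonzero _ 4) in Hb'.
    symmetry in Hb; apply Rmult_integral in Hb; tauto. }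
  assert (Z1 : lin l' bk = 0) by (apply Z; rewrite <- E1; ring).
  assert (Z2 : lin l' bl = 0) by (apply Z; rewrite <- E2; ring).
  rewrite Z1, Z2 in E3; nra.
Qed.

(* F_{(l,k)} is not below F_{(l,l)}: otherwise l^2 k^2 = C (l o s^{-1})^4. *)
Lemma not_sub_L3_L4 l k : l <> vzero -> cross l k <> vzero -> cross k l <> vzero ->
  ~ face_sub (faceLU l (U_line k)) (faceLU l (U_line l)).
Proof.
  intros Hl Hlk Hkl Hsub.
  destruct (face_sub_faceLU_inv _ _ _ _ Hsub
              (faceLU_member l _ _ (form2_sq_lin k) (sq_lin_ge0 k) (sq_lin_vanishes k)))
    as (s & sinv & h & Hsi & _ & Hh & Hhp & Hhz & Heq).
  destruct (lin_pullback l sinv Hsi) as [l' HL].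
  apply (no_fourth_power l k l' (h l / nsq l ^ 2) Hlk Hkl); intros a.
  pose proof (Heq a) as E; unfold sq_lin in E; rewrite E.
  rewrite (psd_vanishing_on_plane l h Hl Hh Hhp Hhz (sinv a)), HL; ring.
Qed.

Lemma not_sub_face0 F f b : F f -> f b <> 0 -> ~ face_sub F face0.
Proof.
  intros Hf Hb (s & sinv & _ & _ & _ & _ & HF).
  destruct (HF f Hf) as [g [Hg ->]]; rewrite Hg in Hb; apply Hb; reflexivity.
Qed.

Lemma test_not_sub_face0 l U g m : test_form l U g -> cross l m <> vzero ->
  ~ face_sub (faceLU l U) face0.
Proof.
  intros (Hg & Hgp & Hgz & Hoff) Hm; destruct (Hoff m Hm) as (b & _ & Hb & Hgb).
  apply (not_sub_face0 _ _ b (faceLU_member l U g Hg Hgp Hgz)).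
  apply Rmult_integral_contrapositive; split; [apply pow_nonzero|]; assumption.
Qed.

Lemma not_sub_L3_face0 l k : cross l k <> vzero -> cross k l <> vzero ->
  ~ face_sub (faceLU l (U_line k)) face0.
Proof.
  intros Hlk Hkl.
  destruct (point_on_off k l Hlk) as (bk & Kbk & Lbk).
  destruct (point_on_off l k Hkl) as (bl & Lbl & Kbl).
  apply (not_sub_face0 _ _ (vadd bk bl)
           (faceLU_member l _ _ (form2_sq_lin k) (sq_lin_ge0 k) (sq_lin_vanishes k))).
  unfold sq_lin; rewrite !lin_vadd, Kbk, Lbl.
  apply Rmult_integral_contrapositive; split; apply pow_nonzero; lra.
Qed.

Definition below (i j : faceA) : bool :=
  match i, j with
  | L0, L0 | L1, L1 | L2, L2 | L3, L3 | L4, L4 => true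
  | Fzero, _ => true
  | L1, L0 | L2, L0 | L3, L0 | L4, L0 | L3, L1 | L3, L2 | L4, L2 => true
  | _, _ => false
  end.

Lemma below_of_closure i j : clos_refl_trans faceA genA i j -> below i j = true.
Proof.
  induction 1 as [x y H | x | x y z _ IH1 _ IH2].
  - destruct x, y; simpl in H; try contradiction; reflexivity.
  - destruct x; reflexivity.
  - destruct x, y, z; simpl in *; congruence.
Qed.

(* Builds a path of generating coverings; genA is acyclic, so this terminates. *)
Ltac climb :=
  first [ apply rt_refl | apply rt_step; exact I
        | apply rt_trans with L1; [apply rt_step; exact I | climb]
        | apply rt_trans with L2; [apply rt_step; exact I | climb]
        | apply rt_trans with L3; [apply rt_step; exact I | climb]
        | apply rt_trans with L4; [apply rt_step; exact I | climb] ].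

Lemma closure_of_below i j : below i j = true -> clos_refl_trans faceA genA i j.
Proof. destruct i, j; simpl; intros H; try discriminate; climb. Qed.

Section TypeAFaces.

Variables l k p q : vec.
Hypothesis hl : l <> vzero.
Hypothesis hlk : ~ (exists c : R, k = vscal c l).
Hypothesis hp : p <> vzero.
Hypothesis hpl : lin l p = 0.
Hypothesis hql : lin l q <> 0.

Lemma faceA_sub_of_below i j :
  below i j = true -> face_sub (faceA_of l k p q i) (faceA_of l k p q j).
Proof.
  destruct (cross_nonzero_of_not_parallel l k hl hlk) as [Hlk Hkl].
  destruct (point_on_off l k Hkl) as (bl & Lbl & Kbl).
  destruct i, j; simpl; intros H; try discriminate; try apply face_sub_refl;
    try apply face_sub_zero; try (apply face_sub_of_incl; intros u []; fail).
  (* F_{L3} below F_{L1}: shear along a point bl of l off k. *)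
  - apply (line_face_sub_point_face l k q bl Lbl Kbl).
    apply (cross_nonzero_of_sep l); [exact hql | exact Lbl | exact (nonzero_of_lin k bl Kbl)].
  (* F_{L3} below F_{L2}: trivial if p lies on k, else shear along p + (l x k). *)
  - destruct (Req_dec (lin k p) 0) as [Hkp|Hkp].
    + apply face_sub_of_incl; intros u [t ->]; unfold U_line; rewrite lin_vscal, Hkp; ring.
    + apply (line_face_sub_point_face l k p (vadd p (cross l k))).
      * rewrite lin_vadd, hpl, lin_cross_l; ring.
      * rewrite lin_vadd, lin_cross_r; lra.
      * rewrite cross_vadd_self; apply (cross_nonzero_of_sep k); auto using lin_cross_r.
  - apply face_sub_of_incl; intros u [t ->]; unfold U_line; rewrite lin_vscal, hpl; ring.
Qed.

Lemma faceA_not_sub_of_not_below i j :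
  below i j = false -> ~ face_sub (faceA_of l k p q i) (faceA_of l k p q j).
Proof.
  destruct (cross_nonzero_of_not_parallel l k hl hlk) as [Hlk Hkl].
  destruct (point_on_off k l Hlk) as (bk & Kbk & Lbk).
  assert (hq : q <> vzero) by exact (nonzero_of_lin l q hql).
  assert (Hu0 : U_line k (cross l k)) by apply lin_cross_r.
  assert (Lu0 : lin l (cross l k) = 0) by apply lin_cross_l.
  pose proof (U_point_self q) as Hq; pose proof (U_point_self p) as Hp.
  (* Witness points: q and p, l x k on both lines, and bk on k off l. *)
  destruct i, j; simpl; intros H; try discriminate.
  - apply (not_sub_L0 l _ q); auto.
  - apply (not_sub_L0 l _ p); auto.
  - apply (not_sub_L0 l _ (cross l k)); auto.
  - apply (not_sub_L0 l _ p); auto.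
  - apply (test_not_sub_face0 l _ _ k (test_nsq l) Hlk).
  - apply (not_sub_L1 l q _ p); auto.
  - apply (not_sub_L1 l q _ (cross l k)); auto.
  - apply (not_sub_L1 l q _ p); auto.
  - apply (test_not_sub_face0 l _ _ k (test_sq_cross l q hq) Hlk).
  - apply (not_sub_L2 l p _ q); auto.
  - apply (not_sub_L2 l p _ bk); auto.
  - apply not_sub_L2_L4; auto.
  - apply (test_not_sub_face0 l _ _ k (test_sq_cross l p hp) Hlk).
  - apply not_sub_L3_L4; auto.
  - apply not_sub_L3_face0; auto.
  - apply (not_sub_L4 l _ q); auto.
  - apply (not_sub_L4 l _ bk); auto.
  - apply (test_not_sub_face0 l _ _ k (test_sq_lin l) Hlk).
Qed.

End TypeAFaces.

Theorem mainTheorem19 (l k p q : vec)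
  (hl : l <> vzero) (hk : k <> vzero)
  (hlk : ~ (exists c : R, k = vscal c l))
  (hp : p <> vzero) (hpl : lin l p = 0)
  (hql : lin l q <> 0) :
  (forall i j : faceA,
     face_sub (faceA_of l k p q i) (faceA_of l k p q j) <-> clos_refl_trans faceA genA i j) /\
  ~ face_sub (faceA_of l k p q L1) (faceA_of l k p q L2) /\
  ~ face_sub (faceA_of l k p q L2) (faceA_of l k p q L1) /\
  ~ face_sub (faceA_of l k p q L3) (faceA_of l k p q L4) /\
  ~ face_sub (faceA_of l k p q L4) (faceA_of l k p q L3) /\
  ~ face_sub (faceA_of l k p q L4) (faceA_of l k p q L1).
Proof.
  pose proof (faceA_not_sub_of_not_below l k p q hl hlk hp hpl hql) as Hneg.
  split.
  - intros i j; split.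
    + intros Hsub; apply closure_of_below.
      destruct (below i j) eqn:E; [reflexivity|].
      exfalso; exact (Hneg i j E Hsub).
    + intros Hcl; apply (faceA_sub_of_below l k p q hl hlk hpl hql), below_of_closure, Hcl.
  - repeat split; apply Hneg; reflexivity.
Qed.
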